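(* Let $\mu,\nu$ be finite Borel measures in metric spaces $X$ and $Y$ respectively, and let $\mu\times\nu$ be the product measure on $X\times Y$ (with the maximum metric). Then (i) $\dim_{\mathrm P}(\mu\times\nu)\ge\dim_{\mathrm P}\mu+\underline{\dim}_{\mathrm P}\nu$; (ii) $\underline{\dim}_{\mathrm P}(\mu\times\nu)\ge\underline{\dim}_{\mathrm P}\mu+\underline{\dim}_{\mathrm P}\nu$.
   Context: For a subset $E$ of a metric space, $N_\delta(E)$ is the minimal cardinality of a cover of $E$ by sets of diameter at most $\delta$; $\underline{\dim}_{\mathrm B}E=\liminf_{\delta\to0}\frac{\log N_\delta(E)}{|\log\delta|}$, $\overline{\dim}_{\mathrm B}E=\limsup_{\delta\to0}\frac{\log N_\delta(E)}{|\log\delta|}$; $\dim_{\mathrm P}E=\inf\{\sup_n\overline{\dim}_{\mathrm B}E_n:E\subseteq\bigcup_nE_n\}$ and $\underline{\dim}_{\mathrm P}E=\inf\{\sup_n\underline{\dim}_{\mathrm B}E_n:E\subseteq\bigcup_nE_n\}$ (countable covers). For a finite Borel measure $\mu$ on a metric space $X$ and $\dim$ either of these dimensions, $\dim\mu=\inf\{\dim E: E\subseteq X\text{ Borel},\ \mu(E)>0\}$. *)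

From HB Require Import structures.
From mathcomp Require Import all_boot all_order all_algebra.
From mathcomp Require Import all_classical all_reals all_analysis.
Set Implicit Arguments. Unset Strict Implicit. Unset Printing Implicit Defensive.
Import Order.TTheory GRing.Theory Num.Theory.
Import numFieldNormedType.Exports.
Local Open Scope classical_set_scope.
Local Open Scope ring_scope.

Section MetricDims.
Context {R : realType}.

Definition is_metric (T : Type) (dist : T -> T -> R) : Prop :=
  [/\ (forall x y, 0 <= dist x y),
      (forall x y, dist x y = 0 <-> x = y),
      (forall x y, dist x y = dist y x) &
      (forall x y z, dist x z <= dist x y + dist y z)].

Definition metric_open (T : Type) (dist : T -> T -> R) : set (set T) :=
  [set U | forall x, U x -> exists2 r : R, 0 < r & [set y | dist x y < r] `<=` U].

Definition metric_borel (T : Type) (dist : T -> T -> R) : set (set T) :=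
  <<s metric_open dist >>.

Definition max_dist (T U : Type) (dT : T -> T -> R) (dU : U -> U -> R)
  : T * U -> T * U -> R :=
  fun p q => Num.max (dT p.1 q.1) (dU p.2 q.2).

(** Diameter (in extended reals; the empty set has diameter -oo). *)
Definition diam (T : Type) (dist : T -> T -> R) (E : set T) : \bar R :=
  ereal_sup [set (dist x y)%:E | x in E & y in E].

(** N_delta(E): minimal number of sets of diameter <= delta covering E
    (+oo if there is no finite such cover). *)
Definition covering_number (T : Type) (dist : T -> T -> R) (delta : R) (E : set T)
  : \bar R :=
  ereal_inf [set (n%:R)%:E | n in [set n : nat | exists F : nat -> set T,
     (forall i, (i < n)%N -> (diam dist (F i) <= delta%:E)%E) /\
     E `<=` \bigcup_(i in [set i : nat | (i < n)%N]) F i]].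

Definition elog (x : \bar R) : \bar R :=
  match x with
  | EFin x' => if (0 < x')%R then EFin (ln x') else -oo
  | +oo => +oo
  | -oo => -oo
  end%E.

Definition box_ratio (T : Type) (dist : T -> T -> R) (E : set T) (delta : R)
  : \bar R :=
  (elog (covering_number dist delta E) * ((`|ln delta|)^-1)%:E)%E.

Definition lower_box_dim (T : Type) (dist : T -> T -> R) (E : set T) : \bar R :=
  limf_einf (box_ratio dist E) (0^'+).

Definition upper_box_dim (T : Type) (dist : T -> T -> R) (E : set T) : \bar R :=
  limf_esup (box_ratio dist E) (0^'+).

Definition packing_dim (T : Type) (dist : T -> T -> R) (E : set T) : \bar R :=
  ereal_inf [set ereal_sup (range (fun n => upper_box_dim dist (F n)))
            | F in [set F : nat -> set T | E `<=` \bigcup_n F n]].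

Definition lower_packing_dim (T : Type) (dist : T -> T -> R) (E : set T) : \bar R :=
  ereal_inf [set ereal_sup (range (fun n => lower_box_dim dist (F n)))
            | F in [set F : nat -> set T | E `<=` \bigcup_n F n]].

Definition measure_dim (d : measure_display) (T : measurableType d)
  (dim : set T -> \bar R) (mu : set T -> \bar R) : \bar R :=
  ereal_inf [set dim E | E in [set E : set T | measurable E /\ (0 < mu E)%E]].

End MetricDims.

From HB Require Import structures.
From mathcomp Require Import all_boot all_order all_algebra.
From mathcomp Require Import all_classical all_reals all_analysis.
From mathcomp Require Import ring lra.
Import Order.TTheory GRing.Theory Num.Theory.
Import numFieldNormedType.Exports.
Set Implicit Arguments. Unset Strict Implicit. Unset Printing Implicit Defensive.
Local Open Scope classical_set_scope.
Local Open Scope ring_scope.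

(* Let E have positive (mu x nu)-measure. The points x whose section E_x has
   positive nu-measure form a set A of positive mu-measure, and every such E_x
   has lower packing dimension at least dim nu. Given a countable cover (F_n)
   of E, the sets G_{n,k} of points x at which the box-counting ratio of the
   section of F_n exceeds t at all scales below 1/(k+1) cover A, so one of
   them has (upper or lower) box dimension above dim mu. The box dimension of
   F_n is then bounded below by counting: a delta-separated subset of G_{n,k}
   has at least N_{2 delta}(G_{n,k}) points, a set of diameter at most delta
   for the maximum metric meets at most one of the fibres over it, and each
   fibre needs N_delta of them. *)

Section CoveringNumbers.
Context {R : realType} {T : Type} (dist : T -> T -> R).

Definition covered_by (delta : R) (E : set T) (n : nat) : Prop :=
  exists F : nat -> set T,
    (forall i, (i < n)%N -> (diam dist (F i) <= delta%:E)%E) /\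
    E `<=` \bigcup_(i in [set i : nat | (i < n)%N]) F i.

Definition cover_size_ge (delta : R) (E : set T) (k : nat) : Prop :=
  forall n, covered_by delta E n -> (k <= n)%N.

Lemma diam_leP (F : set T) (delta : R) :
  (diam dist F <= delta%:E)%E <-> (forall x y, F x -> F y -> dist x y <= delta).
Proof.
split => [diamF x y Fx Fy|dist_le].
- rewrite -lee_fin; apply: le_trans diamF.
  by apply: ereal_sup_ubound; exists x => //; exists y.
- by apply/ereal_supP => _ [x Fx [y Fy <-]]; rewrite lee_fin; exact: dist_le.
Qed.

Lemma covering_number_ge (delta : R) (E : set T) k :
  cover_size_ge delta E k -> ((k%:R)%:E <= covering_number dist delta E)%E.
Proof.
by move=> ge_k; apply/ereal_infP => _ [n cov_n <-]; rewrite lee_fin ler_nat; exact: ge_k.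
Qed.

Lemma covering_number_le (delta : R) (E : set T) n :
  covered_by delta E n -> (covering_number dist delta E <= (n%:R)%:E)%E.
Proof. by move=> cov_n; apply: ereal_inf_lbound; exists n. Qed.

(* The least integer exceeding [delta ^ -c], for [0 < delta < 1]. *)
Definition cover_threshold (c delta : R) : nat :=
  (Num.truncn (expR (c * `|ln delta|))).+1.

Lemma ln_cover_threshold_gt (c delta : R) :
  c * `|ln delta| < ln (cover_threshold c delta)%:R.
Proof.
by rewrite -[X in X < _]expRK ltr_ln ?posrE ?expR_gt0 ?ltr0n ?truncnS_gt.
Qed.

Lemma abs_ln_gt0 (delta : R) : 0 < delta < 1 -> 0 < `|ln delta|.
Proof. by move=> /andP[d0 d1]; rewrite normr_gt0 lt_eqF // ln_lt0 // d0 d1. Qed.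

Lemma box_ratio_gt_of_cover_size_ge (E : set T) delta c k :
  0 < delta < 1 -> cover_size_ge delta E k -> (0 < k)%N ->
  c * `|ln delta| < ln k%:R -> (c%:E < box_ratio dist E delta)%E.
Proof.
move=> /abs_ln_gt0 lnd ge_k k0 ck.
have := covering_number_ge ge_k; rewrite /box_ratio.
case: (covering_number dist delta E) => [r| |] //=; rewrite ?lee_fin => kr.
- have r0 : 0 < r by apply: lt_le_trans kr; rewrite ltr0n.
  rewrite r0 -EFinM lte_fin ltr_pdivlMr // (lt_le_trans ck) //.
  by rewrite ler_ln ?posrE ?ltr0n // -lee_fin.
- by rewrite gt0_mulye ?lte_fin ?invr_gt0 // ltry.
Qed.

Lemma cover_size_ge_of_box_ratio_gt (E : set T) delta c :
  0 < delta < 1 -> (c%:E < box_ratio dist E delta)%E ->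
  cover_size_ge delta E (cover_threshold c delta).
Proof.
move=> /abs_ln_gt0 lnd ratio_gt n cov_n; rewrite leqNgt; apply/negP => small_n.
have n_le : n%:R <= expR (c * `|ln delta|).
  by rewrite -truncn_ge_nat ?expR_ge0 // -ltnS.
have := covering_number_le cov_n; move: ratio_gt; rewrite /box_ratio.
case: (covering_number dist delta E) => [r| |] //= ratio_gt r_le.
- move: ratio_gt; case: ifPn => r0; last by rewrite gt0_mulNye ?lte_fin ?invr_gt0.
  rewrite -EFinM lte_fin ltr_pdivlMr //; apply/negP; rewrite -leNgt.
  rewrite -[X in _ <= X]expRK ler_ln ?posrE ?expR_gt0 //.
  by apply: le_trans n_le; rewrite -lee_fin.
- by move: ratio_gt; rewrite mulNyr gtr0_sg ?invr_gt0 // mul1e.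
Qed.

End CoveringNumbers.

Section SeparatedFamilies.
Context {R : realType} {X Y : Type} (dX : X -> X -> R) (dY : Y -> Y -> R).

Definition separated (delta : R) (f : nat -> X) (m : nat) : Prop :=
  forall i j, (i < m)%N -> (j < m)%N -> i <> j -> delta < dX (f i) (f j).

(* Greedy construction: while fewer than [m] points are chosen, the closed
   [delta]-balls around them are too few to cover [G]. *)
Lemma exists_separated (x0 : X) delta (G : set X) m :
  is_metric dX -> cover_size_ge dX (delta + delta) G m ->
  exists2 f, (forall i, (i < m)%N -> G (f i)) & separated delta f m.
Proof.
case=> _ _ dsym dtri G_ge.
suff: forall m', (m' <= m)%N ->
    exists2 f, (forall i, (i < m')%N -> G (f i)) & separated delta f m'.
  exact.
elim=> [_|m' IH lt_m]; first by exists (fun=> x0).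
have [f Gf sep_f] := IH (ltnW lt_m).
have [z Gz far_z] : exists2 z, G z & forall i, (i < m')%N -> delta < dX (f i) z.
  have : ~ G `<=` \bigcup_(i in [set i | (i < m')%N]) [set z | dX (f i) z <= delta].
    move=> G_balls; move: lt_m; apply/negP; rewrite -leqNgt.
    apply: G_ge; exists (fun i => [set z | dX (f i) z <= delta]); split => // i _.
    apply/diam_leP => x y /= near_x near_y.
    by apply: le_trans (dtri x (f i) y) _; rewrite dsym lerD.
  move=> /existsNP[z /not_implyP[Gz no_ball]]; exists z => // i im.
  by rewrite ltNge; apply/negP => near_z; apply: no_ball; exists i.
exists (fun i => if i == m' then z else f i).
  by move=> i; rewrite ltnS leq_eqVlt; case: eqP => [-> //|_ /= /Gf].
move=> i j; wlog lt_ij : i j / (i < j)%N => [wlog_lt hi hj ne_ij|].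
  case: (ltngtP i j) => [lt|gt|eq]; first exact: wlog_lt.
    by rewrite dsym; apply: wlog_lt => // eq; apply: ne_ij.
  by case: (ne_ij eq).
move=> _ hj _; have im : (i < m')%N := leq_trans lt_ij hj.
rewrite (ltn_eqF im); case: eqP => [_|ne_j]; first exact: far_z.
have jm : (j < m')%N by rewrite ltn_neqAle -ltnS hj andbT; exact/eqP.
by apply: sep_f => // eq_ij; rewrite eq_ij ltnn in lt_ij.
Qed.

(* A set of diameter at most [delta] in the maximum metric meets at most one
   of the fibres over a [delta]-separated family, and each fibre needs [k] of
   them: double counting. *)
Lemma product_cover_size_ge delta (F : set (X * Y)) (f : nat -> X) m k :
  separated delta f m ->
  (forall i, (i < m)%N -> cover_size_ge dY delta (xsection F (f i)) k) ->
  cover_size_ge (max_dist dX dY) delta F (m * k).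
Proof.
move=> sep_f fibre_ge n [G [diamG covF]].
pose meets i j : bool := `[< exists y, G j (f i, y) >].
have meets_unique i i' j : (i < m)%N -> (i' < m)%N -> (j < n)%N ->
    meets i j -> meets i' j -> i = i'.
  move=> im i'm jn /asboolP[y Gy] /asboolP[y' Gy']; apply: contrapT => ne.
  move: (sep_f i i' im i'm ne); apply/negP; rewrite -leNgt.
  have /diam_leP/(_ _ _ Gy Gy') := diamG j jn.
  by rewrite /max_dist /= ge_max => /andP[].
have meets_once j : (j < n)%N -> (\sum_(0 <= i < m) meets i j <= 1)%N.
  move=> jn.
  have [[i0 /andP[i0m meets_i0]]|none] :=
    pselect (exists i0, (i0 < m)%N && meets i0 j).
    rewrite (bigD1_seq i0) ?mem_index_iota ?iota_uniq //= big1_seq ?addn0 ?leq_b1 //.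
    move=> i /andP[ne_i0 /[!mem_index_iota] /andP[_ im]].
    apply/eqP; rewrite eqb0; apply/negP => meets_i; move/eqP: ne_i0; apply.
    exact: meets_unique meets_i meets_i0.
  rewrite big1_seq // => i /[!mem_index_iota] /andP[_ /andP[_ im]].
  by apply/eqP; rewrite eqb0; apply/negP => meets_i; apply: none; exists i; rewrite im.
have fibre_count i : (i < m)%N -> (k <= \sum_(0 <= j < n) meets i j)%N.
  move=> im; pose s := [seq j <- iota 0 n | meets i j].
  have -> : (\sum_(0 <= j < n) meets i j)%N = size s.
    rewrite size_filter -sum1_count [RHS]big_mkcond /index_iota subn0.
    by apply: eq_bigr => j _; case: (meets i j).
  apply: (fibre_ge i im); exists (fun l => [set y | G (nth 0%N s l) (f i, y)]).
  split => [l ls|y].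
    apply/diam_leP => y y' Gy Gy'.
    have : nth 0%N s l \in s := mem_nth 0%N ls.
    rewrite mem_filter mem_iota add0n => /andP[_ /andP[_ ln]].
    have /diam_leP/(_ _ _ Gy Gy') := diamG _ ln.
    by rewrite /max_dist /= ge_max => /andP[].
  rewrite /xsection /= inE => /covF[j /= jn Gj].
  have js : j \in s.
    by rewrite mem_filter mem_iota add0n leq0n jn !andbT; apply/asboolP; exists y.
  by exists (index j s); [rewrite /= index_mem | rewrite nth_index].
have -> : (m * k = \sum_(0 <= i < m) k)%N by rewrite sum_nat_const_nat subn0.
apply: (@leq_trans (\sum_(0 <= i < m) \sum_(0 <= j < n) meets i j)).
  rewrite big_nat_cond [X in (_ <= X)%N]big_nat_cond.
  by apply: leq_sum => i /andP[/andP[_ im] _]; exact: fibre_count.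
rewrite exchange_big_nat.
apply: (@leq_trans (\sum_(0 <= j < n) 1)); last by rewrite sum_nat_const_nat subn0 muln1.
rewrite big_nat_cond [X in (_ <= X)%N]big_nat_cond.
by apply: leq_sum => j /andP[/andP[_ jn] _]; exact: meets_once.
Qed.

End SeparatedFamilies.

Section LimitsAtZero.
Context {R : realType}.
Implicit Types (f : R -> \bar R) (c : R).

Lemma near0_interval (eta : R) : 0 < eta -> (0^'+) [set x : R | (0 < x < eta)%R].
Proof.
move=> eta0; near=> x; apply/andP; split; near: x; first exact: nbhs_right_gt.
exact: nbhs_right_lt.
Unshelve. all: by end_near.
Qed.

Lemma near0_interval_sub (V : set R) : (0^'+) V ->
  exists2 eta : R, 0 < eta & forall x, 0 < x < eta -> V x.
Proof.
move=> /nbhs_ballP[eta /= eta0 ballV]; exists eta => // x /andP[x0 x_eta].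
by apply: ballV => //=; rewrite /ball /= sub0r normrN gtr0_norm.
Qed.

Lemma limf_esup_gt f c : (c%:E < limf_esup f (0^'+))%E ->
  forall eta, 0 < eta -> exists2 d, 0 < d < eta & (c%:E < f d)%E.
Proof.
move=> c_lt eta eta0.
have : (c%:E < ereal_sup (f @` [set x : R | (0 < x < eta)%R]))%E.
  apply: (lt_le_trans c_lt); rewrite limf_esupE; apply: ereal_inf_lbound.
  by exists [set x : R | (0 < x < eta)%R]; first exact: near0_interval.
by move=> /ereal_sup_gt[_ [d d_in <-] c_lt_fd]; exists d.
Qed.

Lemma limf_esup_ge f c :
  (forall eta, 0 < eta -> exists2 d, 0 < d < eta & (c%:E < f d)%E) ->
  (c%:E <= limf_esup f (0^'+))%E.
Proof.
move=> frequently; rewrite limf_esupE.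
apply/ereal_infP => _ [V /near0_interval_sub[eta eta0 etaV] <-].
have [d d_in c_lt] := frequently eta eta0.
by apply: ereal_sup_ge; exists (f d); [exists d => //; exact: etaV | exact: ltW].
Qed.

Lemma limf_einf_gt f c : (c%:E < limf_einf f (0^'+))%E ->
  exists2 eta, 0 < eta & forall d, 0 < d < eta -> (c%:E < f d)%E.
Proof.
rewrite limf_einfE => /ereal_sup_gt[_ [V /near0_interval_sub[eta eta0 etaV] <-] c_lt].
exists eta => // d d_in; apply: (lt_le_trans c_lt); apply: ereal_inf_lbound.
by exists d => //; exact: etaV.
Qed.

Lemma limf_einf_ge f c :
  (exists2 eta, 0 < eta & forall d, 0 < d < eta -> (c%:E < f d)%E) ->
  (c%:E <= limf_einf f (0^'+))%E.
Proof.
move=> [eta eta0 eventually]; rewrite limf_einfE; apply: ereal_sup_ge.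
exists (ereal_inf (f @` [set x : R | (0 < x < eta)%R])).
  by exists [set x : R | (0 < x < eta)%R] => //; exact: near0_interval.
by apply/ereal_infP => _ [d d_in <-]; exact/ltW/eventually.
Qed.

End LimitsAtZero.

Section ExtendedRealBounds.
Context {R : realType}.

Lemma lte_fin_between (s : R) (a : \bar R) : (s%:E < a)%E ->
  exists2 s1 : R, s < s1 & (s1%:E < a)%E.
Proof.
case: a => [a| |] //= s_lt; last by exists (s + 1); [lra | rewrite ltry].
rewrite lte_fin in s_lt.
by exists ((s + a) / 2); [lra | rewrite lte_fin; lra].
Qed.

Lemma lee_adde_of_fin_lt (a b z : \bar R) :
  (forall s t : R, (s%:E < a)%E -> (t%:E < b)%E -> ((s + t)%:E <= z)%E) ->
  (a + b <= z)%E.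
Proof.
case: z => [z| |] approx; last 2 first.
- by rewrite leey.
- have below (r : R) : ((r - 1)%:E < r%:E)%E by rewrite lte_fin; lra.
  case: a approx => [a| |] approx; case: b approx => [b| |] approx //=.
  + by have := approx (a - 1) (b - 1) (below _) (below _).
  + by have := approx (a - 1) 0 (below _) (ltry _).
  + by have := approx 0 (b - 1) (ltry _) (below _).
  + by have := approx 0 0 (ltry _) (ltry _).
case: a approx => [a| |] approx; case: b approx => [b| |] approx //=;
  try by rewrite ?addeNy ?addNye leNye.
- rewrite lee_fin leNgt; apply/negP => gt_z.
  have := approx (a - (a + b - z) / 4) (b - (a + b - z) / 4).
  by rewrite !lte_fin lee_fin; lra.
- exfalso; have := approx (a - 1) (z - a + 2); rewrite !lte_fin ltry lee_fin; lra.
- exfalso; have := approx (z - b + 2) (b - 1); rewrite !lte_fin ltry lee_fin; lra.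
- exfalso; have := approx 1 z; rewrite !ltry lee_fin; lra.
Qed.

End ExtendedRealBounds.

(* Passing from scale [2d] to scale [d] changes [|ln d|] by [ln 2] only, which
   the gap [s1 - s] absorbs for small [d]. *)
Lemma log_scale_doubling {R : realType} (s s1 : R) : s < s1 ->
  exists2 eta : R, 0 < eta &
    forall d, 0 < d < eta -> d + d < 1 /\ s * `|ln d| <= s1 * `|ln (d + d)|.
Proof.
move=> s_s1; pose L := `|s1| * ln 2 / (s1 - s).
exists (Num.min (2^-1) (expR (- L))); first by rewrite lt_min invr_gt0 ltr0n expR_gt0.
move=> d /andP[d0]; rewrite lt_min => /andP[d_half d_L].
have dd1 : d + d < 1 by lra.
split => //.
have lnd : ln d < - L by rewrite -[X in _ < X]expRK ltr_ln ?posrE ?expR_gt0.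
have lndd : ln (d + d) = ln 2 + ln d.
  by rewrite -lnM ?posrE ?ltr0n //; congr ln; lra.
have ln2 : 0 <= ln (2 : R) by rewrite ln_ge0 // ler1n.
rewrite !ltr0_norm ?ln_lt0 ?d0 ?dd1 ?addr_gt0 //; last lra.
have gapL : (s1 - s) * L = `|s1| * ln 2 by rewrite /L; field; rewrite subr_eq0 gt_eqF.
have : (s1 - s) * L <= (s1 - s) * (- ln d) by rewrite ler_pM2l ?subr_gt0 // ltW // ltrNr.
have : s1 * ln 2 <= `|s1| * ln 2 by rewrite ler_wpM2r // ler_norm.
rewrite lndd; nra.
Qed.

Section ProductBoxDimension.
Context {R : realType} {X Y : Type} (x0 : X) (dX : X -> X -> R) (dY : Y -> Y -> R).
Hypothesis metric_dX : is_metric dX.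

Definition fibre_ratio_gt (F : set (X * Y)) (t eta : R) : set X :=
  [set x | forall d, 0 < d < eta -> (t%:E < box_ratio dY (xsection F x) d)%E].

Lemma box_ratio_prod_gt (F : set (X * Y)) (G : set X) s s1 t d :
  0 < d -> d + d < 1 -> s * `|ln d| <= s1 * `|ln (d + d)| ->
  (s1%:E < box_ratio dX G (d + d))%E ->
  (forall x, G x -> (t%:E < box_ratio dY (xsection F x) d)%E) ->
  ((s + t)%:E < box_ratio (max_dist dX dY) F d)%E.
Proof.
move=> d0 dd1 slack G_ratio fibre_ratio.
have d_unit : 0 < d < 1 by rewrite d0 /=; lra.
have dd_unit : 0 < d + d < 1 by rewrite dd1 addr_gt0.
have [f Gf sep_f] :=
  exists_separated x0 metric_dX (cover_size_ge_of_box_ratio_gt dd_unit G_ratio).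
apply: (box_ratio_gt_of_cover_size_ge d_unit (product_cover_size_ge sep_f _)).
- by move=> i im; exact: cover_size_ge_of_box_ratio_gt d_unit (fibre_ratio _ (Gf i im)).
- by rewrite muln_gt0.
- rewrite natrM lnM ?posrE ?ltr0n //.
  have := ln_cover_threshold_gt s1 (d + d); have := ln_cover_threshold_gt t d; lra.
Qed.

Lemma upper_box_dim_prod_ge (F : set (X * Y)) (G : set X) s t eta :
  0 < eta -> (s%:E < upper_box_dim dX G)%E -> G `<=` fibre_ratio_gt F t eta ->
  ((s + t)%:E <= upper_box_dim (max_dist dX dY) F)%E.
Proof.
move=> eta0 /lte_fin_between[s1 s_s1 G_dim] G_fibres; apply: limf_esup_ge => e e0.
have [e1 e10 doubling] := log_scale_doubling s_s1.
have e20 : 0 < Num.min (Num.min e e1) eta by rewrite !lt_min e0 e10 eta0.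
have [d2 /andP[d20 d2_lt] G_ratio] := limf_esup_gt G_dim e20.
pose d := d2 / 2; have d2E : d2 = d + d := splitr d2.
have d0 : 0 < d by rewrite divr_gt0.
move: d2_lt; rewrite d2E !lt_min => /andP[/andP[dd_e dd_e1] dd_eta].
have d_e1 : 0 < d < e1 by rewrite d0 /=; lra.
have [dd1 slack] := doubling d d_e1.
exists d; first by rewrite d0 /=; lra.
apply: (box_ratio_prod_gt (G := G) d0 dd1 slack); first by rewrite -d2E.
by move=> x /G_fibres; apply; rewrite d0 /=; lra.
Qed.

Lemma lower_box_dim_prod_ge (F : set (X * Y)) (G : set X) s t eta :
  0 < eta -> (s%:E < lower_box_dim dX G)%E -> G `<=` fibre_ratio_gt F t eta ->
  ((s + t)%:E <= lower_box_dim (max_dist dX dY) F)%E.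
Proof.
move=> eta0 /lte_fin_between[s1 s_s1 /limf_einf_gt[e e0 G_ratio]] G_fibres.
have [e1 e10 doubling] := log_scale_doubling s_s1.
apply: limf_einf_ge; exists (Num.min (Num.min (e / 2) e1) eta).
  by rewrite !lt_min divr_gt0 // e10 eta0.
move=> d /andP[d0]; rewrite !lt_min => /andP[/andP[d_e d_e1] d_eta].
have [dd1 slack] := doubling d (introT andP (conj d0 d_e1)).
apply: (box_ratio_prod_gt (G := G) d0 dd1 slack).
  by apply: G_ratio; rewrite addr_gt0 //=; lra.
by move=> x /G_fibres; apply; rewrite d0.
Qed.

End ProductBoxDimension.

(* The countable stabilization of a set function; [packing_dim dist] and
   [lower_packing_dim dist] are those of the upper and lower box dimensions. *)
Definition stabilized_dim {R : realType} {T : Type} (dim : set T -> \bar R) (E : set T)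
  : \bar R :=
  ereal_inf [set ereal_sup (range (fun n => dim (F n)))
            | F in [set F : nat -> set T | E `<=` \bigcup_n F n]].

Section ProductMeasureDimension.
Context {R : realType} {dX dY : measure_display}
  {X : measurableType dX} {Y : measurableType dY} (distY : Y -> Y -> R)
  (mu : {finite_measure set X -> \bar R}) (nu : {finite_measure set Y -> \bar R}).

(* Otherwise [nu (xsection E x)] vanishes [mu]-almost everywhere, and so does
   its integral [(mu \x nu) E]. *)
Lemma measure_pos_xsection (E : set (X * Y)) :
  measurable E -> (0 < (mu \x nu) E)%E ->
  measurable [set x | (0 < nu (xsection E x))%E] /\
  (0 < mu [set x | (0 < nu (xsection E x))%E])%E.
Proof.
move=> mE E_pos.
have m_nuE := measurable_fun_xsection nu mE.
have mA : measurable [set x | (0 < nu (xsection E x))%E].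
  have := measurable_lte (f := fun=> 0%E) measurableT (measurable_cst _) m_nuE.
  by rewrite setTI.
split => //; rewrite lt0e measure_ge0 andbT; apply/negP => /eqP A0.
move: E_pos; rewrite /product_measure1 /=.
rewrite -(setUv [set x | (0 < nu (xsection E x))%E]) ge0_integral_setU //; last 3 first.
- exact: measurableC.
- by rewrite setUv.
- by rewrite /disj_set setICr.
rewrite null_set_integral //; last exact: measurable_funS m_nuE.
rewrite integral0_eq ?adde0 ?ltxx // => x /= not_pos.
by apply/eqP; rewrite eq_le measure_ge0 andbT leNgt; apply/negP.
Qed.

Lemma exists_fibre_ratio_gt_dim (dim : set X -> \bar R) (F : nat -> set (X * Y))
    (E : set (X * Y)) (s t : R) :
  (s%:E < measure_dim (stabilized_dim dim) mu)%E ->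
  (t%:E < measure_dim (lower_packing_dim distY) nu)%E ->
  measurable E -> (0 < (mu \x nu) E)%E -> E `<=` \bigcup_n F n ->
  exists n k, (s%:E < dim (fibre_ratio_gt distY (F n) t k.+1%:R^-1))%E.
Proof.
move=> s_lt t_lt mE E_pos covE.
have [mA A_pos] := measure_pos_xsection mE E_pos.
set A := [set x | _] in mA A_pos.
pose idx m := odflt (0, 0)%N (unpickle m).
pose H m := fibre_ratio_gt distY (F (idx m).1) t (idx m).2.+1%:R^-1.
have covA : A `<=` \bigcup_m H m.
  move=> x Ax.
  have : (t%:E < ereal_sup (range (fun n => lower_box_dim distY (xsection (F n) x))))%E.
    apply: (lt_le_trans t_lt).
    apply: (@le_trans _ _ (lower_packing_dim distY (xsection E x))).
      apply: ereal_inf_lbound; exists (xsection E x) => //.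
      by split => //; exact: measurable_xsection.
    apply: ereal_inf_lbound; exists (fun n => xsection (F n) x) => //.
    by rewrite /= -xsection_bigcup; exact: le_xsection.
  move=> /ereal_sup_gt[_ [n _ <-] /limf_einf_gt[eta eta0 eventually]].
  exists (pickle (n, Num.truncn eta^-1)) => //.
  rewrite /H /idx pickleK /= => d /andP[d0 d_lt]; apply: eventually.
  rewrite d0 (lt_trans d_lt) //.
  by rewrite -[X in _ < X]invrK ltf_pV2 ?posrE ?invr_gt0 ?ltr0n // truncnS_gt.
have : (s%:E < ereal_sup (range (fun m => dim (H m))))%E.
  apply: (lt_le_trans s_lt); apply: (@le_trans _ _ (stabilized_dim dim A)).
    by apply: ereal_inf_lbound; exists A.
  by apply: ereal_inf_lbound; exists H.
by move=> /ereal_sup_gt[_ [m _ <-]]; exists (idx m).1, (idx m).2.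
Qed.

Lemma measure_dim_prod_ge (dimX : set X -> \bar R) (dimXY : set (X * Y) -> \bar R) :
  (forall (F : set (X * Y)) (G : set X) (s t eta : R), 0 < eta ->
     (s%:E < dimX G)%E -> G `<=` fibre_ratio_gt distY F t eta ->
     ((s + t)%:E <= dimXY F)%E) ->
  (measure_dim (stabilized_dim dimX) mu + measure_dim (lower_packing_dim distY) nu
     <= measure_dim (stabilized_dim dimXY) (mu \x nu))%E.
Proof.
move=> prod_ge; apply/ereal_infP => _ [E [mE E_pos] <-].
apply/ereal_infP => _ [F covE <-]; apply: lee_adde_of_fin_lt => s t s_lt t_lt.
have [n [k G_dim]] := exists_fibre_ratio_gt_dim s_lt t_lt mE E_pos covE.
have eta0 : 0 < k.+1%:R^-1 :> R by rewrite invr_gt0 ltr0n.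
apply: le_trans (prod_ge (F n) _ _ _ _ eta0 G_dim _) _ => //.
by apply: ereal_sup_ubound; exists n.
Qed.

End ProductMeasureDimension.

Theorem theorem6p8 (R : realType)
  (dX dY : measure_display) (X : measurableType dX) (Y : measurableType dY)
  (distX : X -> X -> R) (distY : Y -> Y -> R)
  (hX : is_metric distX) (hY : is_metric distY)
  (hBX : @measurable _ X = metric_borel distX)
  (hBY : @measurable _ Y = metric_borel distY)
  (mu : {finite_measure set X -> \bar R}) (nu : {finite_measure set Y -> \bar R}) :
  (measure_dim (packing_dim (max_dist distX distY)) (mu \x nu)
     >= measure_dim (packing_dim distX) mu
        + measure_dim (lower_packing_dim distY) nu)%E /\
  (measure_dim (lower_packing_dim (max_dist distX distY)) (mu \x nu)
     >= measure_dim (lower_packing_dim distX) mu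
        + measure_dim (lower_packing_dim distY) nu)%E.
Proof.
have x0 : X := point.
split; apply: measure_dim_prod_ge => F G s t eta eta0 G_dim G_fibres.
- exact: (upper_box_dim_prod_ge x0 hX eta0 G_dim G_fibres).
- exact: (lower_box_dim_prod_ge x0 hX eta0 G_dim G_fibres).
Qed.
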